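(* There is an absolute constant $c>0$ such that for all integers $n\ge2$, every prime power $q$, every real $\sigma\ge1$, and every $\sigma$-secure $n$-party one-round aggregation protocol over $\mathbb{F}_q$ in the anonymized model in which each party sends $m$ messages, we have $m\ge c\,\frac{\log q}{\log n}$.
   Context: An $n$-party one-round aggregation protocol over $\mathbb{F}_q$ with $m$ messages per party consists of a randomized encoder $\mathsf{Enc}:\mathbb{F}_q\to[\ell]^m$ (for some positive integer $\ell$; each party applies it to its input with independent randomness) and an analyzer $\mathcal{A}:[\ell]^{nm}\to\mathbb{F}_q$ such that for every $\mathbf{x}\in\mathbb{F}_q^n$, every possible realization of the encodings $\mathsf{Enc}(x_1),\dots,\mathsf{Enc}(x_n)$, and every permutation $\pi$ of $[nm]$, the analyzer applied to the concatenation $(\mathsf{Enc}(x_1),\dots,\mathsf{Enc}(x_n))$ with coordinates permuted by $\pi$ outputs $\sum_i x_i$. For $\mathbf{x}\in\mathbb{F}_q^n$, $\mathcal{S}^{\mathsf{Enc}}_{\mathbf{x}}$ is the distribution on $[\ell]^{nm}$ of this concatenation after applying an independent uniformly random permutation of the $nm$ coordinates. The protocol is $\sigma$-secure if $\mathrm{SD}(\mathcal{S}^{\mathsf{Enc}}_{\mathbf{x}},\mathcal{S}^{\mathsf{Enc}}_{\mathbf{x}'})\le2^{-\sigma}$ for all $\mathbf{x},\mathbf{x}'\in\mathbb{F}_q^n$ with $\sum_ix_i=\sum_ix'_i$, where $\mathrm{SD}$ is statistical distance. *)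

From mathcomp Require Import all_boot all_order all_algebra all_fingroup all_field.
From Stdlib Require Import Reals.

Set Implicit Arguments.
Unset Strict Implicit.
Unset Printing Implicit Defensive.

Section Protocol.

Variables (F : finFieldType) (n m l : nat).

Definition msgs := {ffun 'I_m -> 'I_l}.
Definition transcript := {ffun 'I_(n * m) -> 'I_l}.

(* A randomized encoder is given by its output distribution:
   Enc x e = Pr[Enc(x) = e]. *)
Definition is_encoder (Enc : F -> msgs -> R) : Prop :=
  (forall x e, 0 <= Enc x e)%R /\
  (forall x, \big[Rplus/0%R]_(e : msgs) Enc x e = 1%R).

(* concatenation (Enc(x_1), ..., Enc(x_n)), party i's block first i-th *)
Definition concat (e : {ffun 'I_n -> msgs}) : transcript :=
  [ffun k => mxvec (\matrix_(i < n, j < m) e i j) ord0 k].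

Definition permute (pi : {perm 'I_(n * m)}) (t : transcript) : transcript :=
  [ffun k => t (pi k)].

Definition fsum (x : {ffun 'I_n -> F}) : F := \big[GRing.add/GRing.zero]_(i < n) x i.

Definition aggregation_correct (Enc : F -> msgs -> R) (A : transcript -> F) : Prop :=
  forall (x : {ffun 'I_n -> F}) (e : {ffun 'I_n -> msgs}),
    (forall i, 0 < Enc (x i) (e i))%R ->
    forall pi : {perm 'I_(n * m)}, A (permute pi (concat e)) = fsum x.

Definition shuffled (Enc : F -> msgs -> R) (x : {ffun 'I_n -> F}) (y : transcript) : R :=
  (/ INR #|{perm 'I_(n * m)}| *
   \big[Rplus/0%R]_(pi : {perm 'I_(n * m)})
     \big[Rplus/0%R]_(e : {ffun 'I_n -> msgs})
       (\big[Rmult/1%R]_(i < n) Enc (x i) (e i) *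
        (if permute pi (concat e) == y then 1 else 0)))%R.

Definition SD (T : finType) (P Q : T -> R) : R :=
  (/ 2 * \big[Rplus/0%R]_(t : T) Rabs (P t - Q t))%R.

Definition secure (Enc : F -> msgs -> R) (sigma : R) : Prop :=
  forall x x' : {ffun 'I_n -> F}, fsum x = fsum x' ->
    (SD (shuffled Enc x) (shuffled Enc x') <= Rpower 2 (- sigma))%R.

End Protocol.

(* Feed the inputs (a, -a, 0, ..., 0), all of sum 0.  Security makes their shuffled
   distributions 1/2-close to the one for a = 0, so some transcript y lies in the support
   of at least q/2 of them.  Correctness recovers a from y together with the m positions
   that party 0's messages occupy in y: splicing party 0's encoding of a with the other
   parties' encodings of a' yields an execution on (a, -a', 0, ..., 0) with the same
   transcript, so the analyzer outputs both a - a' and 0.  Hence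
   q <= 2 C(nm, m) <= 2 (3n)^m <= n^(4m). *)

From mathcomp Require Import all_boot all_order all_algebra all_fingroup all_field.
From mathcomp Require Import Rstruct.
From Stdlib Require Import Reals Lra.

Set Implicit Arguments.
Unset Strict Implicit.
Unset Printing Implicit Defensive.

(* [Reals] rebinds [^] in nat_scope to [Nat.pow]. *)
Local Notation "m ^ n" := (expn m n) : nat_scope.

Section RealSums.
Variable T : finType.
Implicit Types (P : pred T) (f g : T -> R).

Lemma sumR_const (A : {pred T}) (c : R) :
  \big[Rplus/0%R]_(i in A) c = (INR #|A| * c)%R.
Proof.
rewrite big_const; elim: #|A| => [|k IH]; first by rewrite Rmult_0_l.
by rewrite iterS IH S_INR; ring.
Qed.

Lemma sumR_delta (t : T) (c : R) :
  \big[Rplus/0%R]_(y : T) (c * (if t == y then 1 else 0))%R = c.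
Proof.
rewrite (bigD1 t) //= eqxx big1 ?Rmult_1_r ?Rplus_0_r // => y /negbTE.
by rewrite eq_sym => ->; rewrite Rmult_0_r.
Qed.

Lemma sumR_indicator P :
  \big[Rplus/0%R]_(a : T) (if P a then 1 else 0)%R = INR #|[set a | P a]|.
Proof.
rewrite -big_mkcond (eq_bigl (mem [set a | P a])) => [|a]; last by rewrite !inE.
by rewrite sumR_const Rmult_1_r.
Qed.

Lemma sumR_ge0 P f : (forall i, P i -> 0 <= f i)%R ->
  (0 <= \big[Rplus/0%R]_(i | P i) f i)%R.
Proof. by move=> f_ge0; apply: (big_ind (Rle 0)) => // *; lra. Qed.

Lemma sumR_le P f g : (forall i, P i -> f i <= g i)%R ->
  (\big[Rplus/0%R]_(i | P i) f i <= \big[Rplus/0%R]_(i | P i) g i)%R.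
Proof. by move=> le_fg; apply: (big_ind2 Rle) => // *; lra. Qed.

Lemma prodR_ge0 f : (forall i, 0 <= f i)%R -> (0 <= \big[Rmult/1%R]_i f i)%R.
Proof. by move=> f_ge0; apply: (big_ind (Rle 0)) => // *; [lra | exact: Rmult_le_pos]. Qed.

Lemma prodR_neq0 f i : (\big[Rmult/1%R]_j f j <> 0)%R -> f i <> 0%R.
Proof. by rewrite (bigD1 i) //= => + fi0; rewrite fi0 Rmult_0_l. Qed.

Lemma sumR_gt0_exists f : (0 < \big[Rplus/0%R]_i f i)%R -> exists i, (0 < f i)%R.
Proof.
case: (pickP (fun i => Rltb 0 (f i))) => [i /RltbP | f_le0 sum_gt0]; first by exists i.
suff : (\big[Rplus/0%R]_i f i <= 0)%R by lra.
apply: (big_ind (Rle^~ 0%R)) => [|*|i _]; try lra.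
by apply: Rnot_lt_le => /RltbP; rewrite f_le0.
Qed.

End RealSums.

Lemma SD_ge_mass_off_support (T : finType) (P Q : T -> R) :
  (forall t, 0 <= P t)%R -> (forall t, 0 <= Q t)%R ->
  \big[Rplus/0%R]_t P t = 1%R -> \big[Rplus/0%R]_t Q t = 1%R ->
  (1 - \big[Rplus/0%R]_t (P t * (if Rltb 0 (Q t) then 1 else 0)) <= SD P Q)%R.
Proof.
move=> P_ge0 Q_ge0 P_sum1 Q_sum1.
have pointwise t : (Q t + P t + -2 * (P t * (if Rltb 0 (Q t) then 1 else 0))
                    <= Rabs (P t - Q t))%R.
  case: RltbP => [Qt_gt0 | /Rnot_lt_le Qt_le0]; first by split_Rabs; lra.
  have -> : Q t = 0%R by have := Q_ge0 t; lra.
  by have := P_ge0 t; split_Rabs; lra.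
have := sumR_le (P := predT) (fun t _ => pointwise t).
by rewrite /SD !big_split /= -big_distrr /= P_sum1 Q_sum1; lra.
Qed.

Lemma exists_point_in_many_events (T I : finType) (P : T -> R) (E : I -> pred T) (d : R) :
  (forall t, 0 <= P t)%R -> \big[Rplus/0%R]_t P t = 1%R ->
  (forall i, d <= \big[Rplus/0%R]_t (P t * (if E i t then 1 else 0)))%R ->
  exists t, (d * INR #|I| <= INR #|[set i | E i t]|)%R.
Proof.
move=> P_ge0 P_sum1 E_mass.
have [t0 _] : exists t0, (0 < P t0)%R by apply: sumR_gt0_exists; lra.
pose cnt t := #|[set i | E i t]|.
have [t _ cnt_max] := @arg_maxnP _ t0 predT cnt isT.
exists t.
have mean_cnt : (d * INR #|I| <= \big[Rplus/0%R]_t' (P t' * INR (cnt t')))%R.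
  rewrite Rmult_comm -sumR_const.
  apply: Rle_trans (sumR_le (P := predT) (fun i _ => E_mass i)) _.
  rewrite exchange_big /=; apply: Req_le; apply: eq_bigr => t' _.
  by rewrite -big_distrr /= sumR_indicator.
apply: (Rle_trans _ _ _ mean_cnt).
apply: Rle_trans (_ : _ <= \big[Rplus/0%R]_t' (P t' * INR (cnt t)))%R _.
  by apply: sumR_le => t' _; apply: Rmult_le_compat_l => //; exact/le_INR/leP/cnt_max.
by rewrite -big_distrl /= P_sum1 Rmult_1_l; apply: Rle_refl.
Qed.

Lemma card_perm_INR_gt0 (T : finType) : (0 < INR #|{perm T}|)%R.
Proof. by apply/lt_0_INR/ltP/card_gt0P; exists 1%g. Qed.

Section Shuffled.
Variables (F : finFieldType) (n m l : nat) (Enc : F -> msgs m l -> R).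
Hypothesis Enc_encoder : is_encoder Enc.
Implicit Types (x : {ffun 'I_n -> F}) (y : transcript n m l).

Definition realizes (x : {ffun 'I_n -> F}) (e : {ffun 'I_n -> msgs m l}) : Prop :=
  forall i, (0 < Enc (x i) (e i))%R.

Lemma exists_realization x : exists e, realizes x e.
Proof.
have /fin_all_exists [e Enc_gt0] : forall i, exists t, (0 < Enc (x i) t)%R.
  by move=> i; apply: sumR_gt0_exists; case: Enc_encoder => _ ->; lra.
by exists [ffun i => e i] => i; rewrite ffunE.
Qed.

Lemma sum_realization_probs x :
  \big[Rplus/0%R]_(e : {ffun 'I_n -> msgs m l}) \big[Rmult/1%R]_i Enc (x i) (e i) = 1%R.
Proof.
rewrite -(bigA_distr_bigA (fun i t => Enc (x i) t)) /=.
by rewrite big1 // => i _; case: Enc_encoder.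
Qed.

Lemma shuffled_ge0 x y : (0 <= shuffled Enc x y)%R.
Proof.
apply: Rmult_le_pos; first exact/Rlt_le/Rinv_0_lt_compat/card_perm_INR_gt0.
apply: sumR_ge0 => pi _; apply: sumR_ge0 => e _; apply: Rmult_le_pos.
  by apply: prodR_ge0 => i; case: Enc_encoder.
by case: (_ == _); lra.
Qed.

Lemma shuffled_sum1 x : \big[Rplus/0%R]_y shuffled Enc x y = 1%R.
Proof.
rewrite /shuffled -big_distrr /= exchange_big /=.
under eq_bigr => pi _ do rewrite exchange_big (eq_bigr _ (fun e _ => sumR_delta _ _)).
rewrite sum_realization_probs sumR_const Rmult_1_r Rinv_l //.
exact/Rgt_not_eq/card_perm_INR_gt0.
Qed.

Lemma shuffled_gt0_realization x y : (0 < shuffled Enc x y)%R ->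
  exists pi (e : {ffun 'I_n -> msgs m l}), realizes x e /\ permute pi (concat e) = y.
Proof.
move=> Sxy_gt0.
have : (0 < \big[Rplus/0%R]_(pi : {perm 'I_(n * m)}) \big[Rplus/0%R]_(e : {ffun 'I_n -> msgs m l})
          (\big[Rmult/1%R]_(i < n) Enc (x i) (e i) *
           (if permute pi (concat e) == y then 1 else 0)))%R.
  apply: (Rmult_lt_reg_l _ _ _ (Rinv_0_lt_compat _ (card_perm_INR_gt0 'I_(n * m)))).
  by rewrite Rmult_0_r.
move=> /sumR_gt0_exists [pi /sumR_gt0_exists [e]].
case: eqP => [<- | _]; last by rewrite Rmult_0_r; lra.
rewrite Rmult_1_r => prod_gt0; exists pi, e; split => // i.
have := prodR_neq0 (i := i) (Rgt_not_eq _ _ prod_gt0).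
case: Enc_encoder => Enc_ge0 _.
by case: (Rle_lt_or_eq_dec _ _ (Enc_ge0 (x i) (e i))) => // <-.
Qed.

Lemma secure_support_mass_ge_half sigma x (x' : {ffun 'I_n -> F}) :
  (1 <= sigma)%R -> secure n Enc sigma -> fsum x = fsum x' ->
  (/ 2 <= \big[Rplus/0%R]_y
            (shuffled Enc x y * (if Rltb 0 (shuffled Enc x' y) then 1 else 0)))%R.
Proof.
move=> sigma_ge1 Enc_secure sum_eq.
have := SD_ge_mass_off_support (shuffled_ge0 x) (shuffled_ge0 x')
          (shuffled_sum1 x) (shuffled_sum1 x').
have := Enc_secure x x' sum_eq.
have : (Rpower 2 (- sigma) <= / 2)%R.
  apply: Rle_trans (Rle_Rpower 2 (- sigma) (-1) _ _) _; try lra.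
  by rewrite Rpower_Ropp Rpower_1; lra.
lra.
Qed.

End Shuffled.

Section TwoPartyInputs.
Variables (F : finFieldType) (n m l : nat) (Enc : F -> msgs m l -> R)
  (A : transcript n m l -> F).
Hypotheses (Enc_encoder : is_encoder Enc) (A_correct : aggregation_correct Enc A).
Hypothesis n_gt1 : (1 < n)%nat.

Local Open Scope ring_scope.
Import GRing.Theory.

Definition party0 : 'I_n := Ordinal (ltnW n_gt1).
Definition party1 : 'I_n := Ordinal n_gt1.

Definition pair_input (a b : F) : {ffun 'I_n -> F} :=
  [ffun i => if i == party0 then a else if i == party1 then - b else 0].

Lemma fsum_pair_input a b : fsum (pair_input a b) = a - b.
Proof.
rewrite /fsum (bigD1 party0) //= (bigD1 party1) //= big1 => [|i /andP [i_neq1 i_neq0]].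
  by rewrite !ffunE eqxx addr0.
by rewrite ffunE (negbTE i_neq0) (negbTE i_neq1).
Qed.

Lemma messages_gt0 : (0 < m)%nat.
Proof.
rewrite lt0n; apply/eqP => m0.
have all_transcripts_eq (t t' : transcript n m l) : t = t'.
  by apply/ffunP => k; have := ltn_ord k; rewrite {2}m0 muln0.
have [e1 realizes1] := exists_realization Enc_encoder (pair_input 1 0).
have [e0 realizes0] := exists_realization Enc_encoder (pair_input 0 0).
have := A_correct realizes1 1%g; have := A_correct realizes0 1%g.
rewrite (all_transcripts_eq (permute _ (concat e0)) (permute 1%g (concat e1))) => ->.
by rewrite !fsum_pair_input !subr0 => /eqP; rewrite eq_sym oner_eq0.
Qed.

Definition first_block : {set 'I_(n * m)} := [set mxvec_index party0 j | j : 'I_m].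

Lemma mxvec_index_inj (i i' : 'I_n) (j j' : 'I_m) :
  mxvec_index i j = mxvec_index i' j' -> i = i' /\ j = j'.
Proof. by move/cast_ord_inj/enum_rank_inj => [-> ->]. Qed.

Lemma mem_first_block i j : (mxvec_index i j \in first_block) = (i == party0).
Proof.
by apply/imsetP/eqP => [[j' _ /mxvec_index_inj []] | ->] //; exists j.
Qed.

Lemma card_first_block : #|first_block| = m.
Proof. by rewrite card_imset ?card_ord // => j j' /mxvec_index_inj []. Qed.

Lemma permuteE (pi : {perm 'I_(n * m)}) (t : transcript n m l) k :
  permute pi t k = t (pi k).
Proof. by rewrite ffunE. Qed.

Lemma concat_mxvec_index (e : {ffun 'I_n -> msgs m l}) i j :
  concat e (mxvec_index i j) = e i j.
Proof. by rewrite /concat ffunE mxvecE mxE. Qed.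

Lemma concat_splice (e e' : {ffun 'I_n -> msgs m l}) k :
  concat [ffun i => if i == party0 then e i else e' i] k =
  if k \in first_block then concat e k else concat e' k.
Proof.
case/mxvec_indexP: k => i j.
by rewrite !concat_mxvec_index mem_first_block ffunE; case: eqP => [->|].
Qed.

Lemma first_block_preimage_inj y a a' pi pi' e e' :
  realizes Enc (pair_input a a) e -> permute pi (concat e) = y ->
  realizes Enc (pair_input a' a') e' -> permute pi' (concat e') = y ->
  pi @^-1: first_block = pi' @^-1: first_block -> a = a'.
Proof.
move=> realizes_e y_e realizes_e' y_e' same_preimage.
have same_block k : (pi k \in first_block) = (pi' k \in first_block).
  by have := congr1 (fun S : {set _} => k \in S) same_preimage; rewrite !inE.
(* Both executions put party 0's messages at the same positions of y, so they can be
   spliced into one execution of [pair_input a a'] that also produces y. *)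
pose route k := if pi k \in first_block then pi k else pi' k.
have route_inj : injective route.
  move=> k1 k2; rewrite /route.
  case: ifP => b1; case: ifP => b2 eq_k; try exact: perm_inj eq_k.
    by move: b2; rewrite same_block -eq_k b1.
  by move: b1; rewrite same_block eq_k b2.
pose e'' := [ffun i => if i == party0 then e i else e' i].
have y_e'' : permute (perm route_inj) (concat e'') = y.
  apply/ffunP => k; rewrite ffunE permE /route /e'' concat_splice.
  have [block_k | not_block_k] := boolP (pi k \in first_block).
    by rewrite /= block_k -y_e permuteE.
  by rewrite same_block in not_block_k; rewrite /= (negbTE not_block_k) -y_e' permuteE.
have realizes_e'' : realizes Enc (pair_input a a') e''.
  move=> i; rewrite ffunE; case: eqP => [-> | /eqP i_neq0].
    by have := realizes_e party0; rewrite !ffunE eqxx.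
  by have := realizes_e' i; rewrite !ffunE (negbTE i_neq0).
have := A_correct realizes_e'' (perm route_inj); rewrite y_e'' fsum_pair_input.
have := A_correct realizes_e' pi'; rewrite y_e' fsum_pair_input subrr => ->.
by move/eqP; rewrite eq_sym subr_eq0 => /eqP.
Qed.

Lemma card_support_pair_inputs_le (y : transcript n m l) :
  (#|[set a | Rltb 0%R (shuffled Enc (pair_input a a) y)]| <= 'C(n * m, m))%nat.
Proof.
set G := [set a | _].
have [e0 _] := exists_realization Enc_encoder (pair_input 0 0).
have /fin_all_exists [w w_spec] : forall a, exists w : {perm 'I_(n * m)} * _,
    a \in G -> realizes Enc (pair_input a a) w.2 /\ permute w.1 (concat w.2) = y.
  move=> a; have [|_] := boolP (a \in G); last by exists (1%g, e0).
  by rewrite inE => /RltbP /(shuffled_gt0_realization Enc_encoder) [pi [e]]; exists (pi, e).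
rewrite -(card_in_imset (f := fun a => (w a).1 @^-1: first_block)); last first.
  move=> a a' /w_spec [realizes_a y_a] /w_spec [realizes_a' y_a'].
  exact: first_block_preimage_inj realizes_a y_a realizes_a' y_a'.
rewrite -[in X in (_ <= X)%nat](card_ord (n * m)) -card_draws.
apply/subset_leq_card/subsetP => _ /imsetP [a _ ->].
by rewrite inE card_preimset ?card_first_block //; exact: perm_inj.
Qed.

Lemma card_field_le_binomial sigma :
  (1 <= sigma)%R -> secure n Enc sigma -> (#|F| <= 2 * 'C(n * m, m))%nat.
Proof.
move=> sigma_ge1 Enc_secure.
have fsum_pair_input_eq a : fsum (pair_input 0 0) = fsum (pair_input a a).
  by rewrite !fsum_pair_input !subrr.
have [y many_supports] := exists_point_in_many_events
  (E := fun a y => Rltb 0%R (shuffled Enc (pair_input a a) y))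
  (shuffled_ge0 Enc_encoder _) (shuffled_sum1 Enc_encoder _)
  (fun a => secure_support_mass_ge_half Enc_encoder sigma_ge1 Enc_secure (fsum_pair_input_eq a)).
apply: (leq_trans _ (leq_mul (leqnn 2) (card_support_pair_inputs_le y))).
apply/leP/INR_le; rewrite mult_INR [INR 2]INR_IZR_INZ.
apply: (Rle_trans _ _ _ _ (Rmult_le_compat_l 2 _ _ _ many_supports)); last lra.
by rewrite -Rmult_assoc Rinv_r ?Rmult_1_l; [apply: Rle_refl | lra].
Qed.

End TwoPartyInputs.

Lemma exp_pow (x : R) k : (exp x ^ k = exp (INR k * x))%R.
Proof.
elim: k => [|k IH]; first by rewrite Rmult_0_l exp_0.
by rewrite S_INR /= IH -exp_plus; congr exp; ring.
Qed.

Lemma INR_expn a b : INR (a ^ b) = (INR a ^ b)%R.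
Proof. by elim: b => [|b IH] //; rewrite expnS mult_INR IH. Qed.

Lemma succn_pow_le k : (k.+1 ^ k <= 3 * k ^ k)%nat.
Proof.
case: k => [|k] //; set r := INR k.+1.
have r_gt0 : (0 < r)%R by apply/lt_0_INR/ltP.
apply/leP/INR_le; rewrite mult_INR !INR_expn -/r [INR 3]INR_IZR_INZ.
have -> : INR k.+2 = (r * (1 + / r))%R by rewrite S_INR -/r; field; lra.
rewrite Rpow_mult_distr Rmult_comm; apply: Rmult_le_compat_r; first by apply: pow_le; lra.
apply: (Rle_trans _ (exp (/ r) ^ k.+1)).
  apply: pow_incr; split; last exact: exp_ineq1_le.
  by have := Rinv_0_lt_compat _ r_gt0; lra.
by rewrite exp_pow -/r Rinv_r; [exact: exp_le_3 | lra].
Qed.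

Lemma pow_le_exp3_fact k : (k ^ k <= 3 ^ k * k`!)%nat.
Proof.
elim: k => [|k IH] //; rewrite expnS factS.
apply: (@leq_trans (k.+1 * (3 * k ^ k))); first by rewrite leq_mul2l succn_pow_le orbT.
by rewrite expnS [X in (_ <= X)]mulnCA -mulnA leq_pmul2l // leq_pmul2l.
Qed.

Lemma ffact_le_exp N k : (N ^_ k <= N ^ k)%nat.
Proof. by elim: k => [|k IH] //; rewrite ffactnSr expnSr leq_mul // leq_subr. Qed.

Lemma bin_mul_pow_le N k : ('C(N, k) * k ^ k <= 3 ^ k * N ^ k)%nat.
Proof.
rewrite -(leq_pmul2r (fact_gt0 k)) mulnAC bin_ffact.
apply: leq_trans (leq_mul (ffact_le_exp N k) (pow_le_exp3_fact k)) _.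
by rewrite mulnCA mulnA.
Qed.

Lemma two_bin_le_pow n m : (1 < n)%nat -> (0 < m)%nat -> (2 * 'C(n * m, m) <= n ^ (4 * m))%nat.
Proof.
move=> n_gt1 m_gt0.
have bin_le : ('C(n * m, m) <= 3 ^ m * n ^ m)%nat.
  have mm_gt0 : (0 < m ^ m)%nat by rewrite expn_gt0 m_gt0.
  rewrite -(leq_pmul2r mm_gt0) -[X in (_ <= X)%nat]mulnA -expnMn.
  exact: bin_mul_pow_le.
have const_le : (2 * 3 ^ m <= (n ^ 3) ^ m)%nat.
  apply: (@leq_trans (2 ^ m * 4 ^ m)).
    by apply: leq_mul; rewrite ?leq_exp2r // -{1}(expn1 2) leq_pexp2l.
  by rewrite -expnMn leq_exp2r // (@leq_trans (2 ^ 3)) // leq_exp2r.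
apply: (@leq_trans (2 * 3 ^ m * n ^ m)); first by rewrite -mulnA leq_mul2l bin_le orbT.
apply: (@leq_trans ((n ^ 3) ^ m * n ^ m)); first by rewrite leq_mul2r const_le orbT.
by rewrite expnM (expnSr n 3) expnMn.
Qed.

Lemma ln_ratio_le (q n k : nat) : (1 < n)%nat -> (0 < q)%nat -> (q <= n ^ k)%nat ->
  (ln (INR q) / ln (INR n) <= INR k)%R.
Proof.
move=> n_gt1 q_gt0 q_le.
have n_gt1R : (1 < INR n)%R by apply/(lt_INR 1)/ltP.
have ln_n_gt0 : (0 < ln (INR n))%R by rewrite -ln_1; apply: ln_increasing; lra.
have ln_q_le : (ln (INR q) <= INR k * ln (INR n))%R.
  rewrite -ln_pow -?INR_expn; last lra.
  have [q_lt | ->] := Rle_lt_or_eq_dec _ _ (le_INR _ _ (leP q_le)); last lra.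
  by apply/Rlt_le/ln_increasing => //; exact/lt_0_INR/ltP.
apply: (Rmult_le_reg_r _ _ _ ln_n_gt0).
by rewrite /Rdiv Rmult_assoc Rinv_l; lra.
Qed.

Theorem mainTheorem9 :
  exists c : R, (0 < c)%R /\
  forall (n : nat) (F : finFieldType) (sigma : R) (m l : nat)
         (Enc : F -> msgs m l -> R) (A : transcript n m l -> F),
    (2 <= n)%N -> (0 < l)%N -> (1 <= sigma)%R ->
    is_encoder Enc -> aggregation_correct Enc A -> secure n Enc sigma ->
    (INR m >= c * (ln (INR #|F|) / ln (INR n)))%R.
Proof.
exists (/ 4)%R; split; first lra.
move=> n F sigma m l Enc A n_gt1 _ sigma_ge1 Enc_encoder A_correct Enc_secure.
have m_gt0 := messages_gt0 Enc_encoder A_correct n_gt1.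
have card_F_le := leq_trans
  (card_field_le_binomial Enc_encoder A_correct n_gt1 sigma_ge1 Enc_secure)
  (two_bin_le_pow n_gt1 m_gt0).
have card_F_gt0 : (0 < #|F|)%nat by apply/card_gt0P; exists (@GRing.zero F).
have := ln_ratio_le n_gt1 card_F_gt0 card_F_le.
rewrite mult_INR [INR 4]INR_IZR_INZ /=; lra.
Qed.
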